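(* Let $Q=2^q$, $n\ge1$, $\gamma\ge0$, $\varepsilon\in[0,1]$, $\delta_1,\delta_2\ge0$, and let $A\subseteq[Q]^n$, $B\subseteq[Q]^n$ be $\gamma$-uniform with $|A|\ge Q^{n(1-\delta_1)}$ and $|B|\ge Q^{n(1-\delta_2)}$. Let $\delta>0$ be arbitrarily small. If $W$ is drawn from $\mathcal{W}_{Q,\varepsilon}$, then with probability at least $1/2$, $$\mathcal{R}^{(0)}_{W,n}\ge 2q\left(1-\left(\frac{\delta_1+\delta_2}{2}+2(1+\gamma)\varepsilon+\delta\right)\right)-2.$$
   Context: Fix an integer $q\ge1$, $Q=2^q$, $[Q]=\{1,\dots,Q\}$, and a symbol $\phi\notin[Q]$. A channel is $W=(W_1,W_2)$ with $W_i:[Q]^2\to[Q]\cup\{\phi\}$; $W^{(n)}_i(x,y)=(W_i(x_1,y_1),\dots,W_i(x_n,y_n))$ for $x,y\in[Q]^n$. A zero-error code of block length $n$ with message sets $[M_1],[M_2]$ consists of encoders $E_i:[M_i]\to[Q]^n$ and decoders $D_i:([Q]\cup\{\phi\})^n\to[M_i]$ with $D_i(W^{(n)}_i(E_1(m_1),E_2(m_2)))=m_i$ for $i=1,2$ and all message pairs; $\mathcal{R}^{(0)}_{W,n}$ is the supremum of $\frac1n\log_2(M_1M_2)$ over such codes. $\mathcal{W}_{Q,\varepsilon}$ is the distribution over channels in which, independently for every $(x,y)\in[Q]^2$, $W(x,y)=(\phi,\phi)$ with probability $\varepsilon$ and $W(x,y)=(x,y)$ otherwise. A pair $(x^{(n)},y^{(n)})\in[Q]^n\times[Q]^n$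 is $\gamma$-uniform if for every $(\alpha,\beta)\in[Q]^2$, $(1-\gamma)\frac{n}{Q^2}\le|\{i\in[n]:(x_i,y_i)=(\alpha,\beta)\}|\le(1+\gamma)\frac{n}{Q^2}$; sets $A,B\subseteq[Q]^n$ are $\gamma$-uniform if every $(x^{(n)},y^{(n)})\in A\times B$ is $\gamma$-uniform. *)

From Stdlib Require Import Reals.
From mathcomp Require Import all_boot.
Set Implicit Arguments. Unset Strict Implicit. Unset Printing Implicit Defensive.

Open Scope R_scope.

(* [Q] is modelled by 'I_Q = {0,...,Q-1}; phi is modelled by None in option 'I_Q. *)
Notation word Q n := ({ffun 'I_n -> 'I_Q}).
Notation oword Q n := ({ffun 'I_n -> option 'I_Q}).

Definition channel (Q : nat) :=
  (('I_Q -> 'I_Q -> option 'I_Q) * ('I_Q -> 'I_Q -> option 'I_Q))%type.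

Definition chan_n (Q n : nat) (Wi : 'I_Q -> 'I_Q -> option 'I_Q) (x y : word Q n)
  : oword Q n := [ffun k => Wi (x k) (y k)].

Definition is_zero_error_code (Q n : nat) (W : channel Q) (M1 M2 : nat)
  (E1 : 'I_M1 -> word Q n) (E2 : 'I_M2 -> word Q n)
  (D1 : oword Q n -> 'I_M1) (D2 : oword Q n -> 'I_M2) : Prop :=
  forall (m1 : 'I_M1) (m2 : 'I_M2),
    D1 (chan_n W.1 (E1 m1) (E2 m2)) = m1 /\ D2 (chan_n W.2 (E1 m1) (E2 m2)) = m2.

Definition log2 (x : R) : R := ln x / ln 2.

Definition achievable_rate (Q n : nat) (W : channel Q) (r : R) : Prop :=
  exists (M1 M2 : nat) (E1 : 'I_M1 -> word Q n) (E2 : 'I_M2 -> word Q n)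
         (D1 : oword Q n -> 'I_M1) (D2 : oword Q n -> 'I_M2),
    (0 < M1)%N /\ (0 < M2)%N /\ is_zero_error_code W E1 E2 D1 D2 /\
    r = log2 (INR (M1 * M2)) / INR n.

Definition zero_error_rate_ge (Q n : nat) (W : channel Q) (c : R) : Prop :=
  forall Rsup : R, is_lub (achievable_rate n W) Rsup -> c <= Rsup.

Definition erasure_channel (Q : nat) (S : {set 'I_Q * 'I_Q}) : channel Q :=
  (fun x y => if (x, y) \in S then None else Some x,
   fun x y => if (x, y) \in S then None else Some y).

(* Probability under W_{Q,eps} that the erasure set is exactly S
   (independent erasure of each of the Q^2 input pairs with probability eps). *)
Definition erasure_weight (Q : nat) (eps : R) (S : {set 'I_Q * 'I_Q}) : R :=
  eps ^ #|S| * (1 - eps) ^ (Q * Q - #|S|)%N.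

(* Pr_{W ~ W_{Q,eps}} [P W] >= p : some collection of erasure patterns, all of
   which satisfy P, has total probability at least p. *)
Definition prob_at_least (Q : nat) (eps : R) (P : channel Q -> Prop) (p : R) : Prop :=
  exists Ev : {set {set 'I_Q * 'I_Q}},
    (forall S, S \in Ev -> P (erasure_channel S)) /\
    p <= \big[Rplus/0]_(S in Ev) erasure_weight eps S.

Definition pair_count (Q n : nat) (x y : word Q n) (a b : 'I_Q) : nat :=
  #|[set k : 'I_n | (x k == a) && (y k == b)]|.

Definition gamma_uniform_pair (Q n : nat) (g : R) (x y : word Q n) : Prop :=
  forall a b : 'I_Q,
    (1 - g) * INR n / INR (Q * Q) <= INR (pair_count x y a b) <=
    (1 + g) * INR n / INR (Q * Q).

Definition gamma_uniform_sets (Q n : nat) (g : R) (A B : {set word Q n}) : Prop :=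
  forall x y, x \in A -> y \in B -> gamma_uniform_pair g x y.

(* If every pair (x, y) of A x B
   has at most m erased coordinates, then receiver 1 cannot confuse x with a
   codeword x' unless x and x' differ only on erased coordinates, i.e. are at
   Hamming distance at most m; symmetrically for receiver 2.  Hence any
   subsets A1 of A and B1 of B whose elements are pairwise at distance > m form
   a zero-error code.  A greedy packing argument gives such subsets with
   |A| <= |A1| * V and |B| <= |B1| * V, where V = 2^n Q^m bounds the size of a
   Hamming ball of radius m; this costs a rate of 2 (n + q m) / n. *)
From HB Require Import structures.
From Stdlib Require Import Reals Lra Lia.
From mathcomp Require Import all_boot zify.
Set Warnings "-notation-overridden,-redundant-canonical-projection".
Set Implicit Arguments. Unset Strict Implicit. Unset Printing Implicit Defensive.
Open Scope R_scope.

Lemma Rplus_assoc' : associative Rplus. Proof. by move=> x y z; ring. Qed.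
Lemma Rmult_assoc' : associative Rmult. Proof. by move=> x y z; ring. Qed.
Lemma Rmult_plus_distr_r' (x y z : R) : (x + y) * z = x * z + y * z.
Proof. ring. Qed.
HB.instance Definition _ :=
  Monoid.isComLaw.Build R 0 Rplus Rplus_assoc' Rplus_comm Rplus_0_l.
HB.instance Definition _ :=
  Monoid.isComLaw.Build R 1 Rmult Rmult_assoc' Rmult_comm Rmult_1_l.
HB.instance Definition _ := Monoid.isMulLaw.Build R 0 Rmult Rmult_0_l Rmult_0_r.
HB.instance Definition _ :=
  Monoid.isAddLaw.Build R Rmult Rplus Rmult_plus_distr_r' Rmult_plus_distr_l.

Lemma Rsum_le (I : Type) (r : seq I) (P : pred I) (F G : I -> R) :
  (forall i, P i -> F i <= G i) ->
  \big[Rplus/0]_(i <- r | P i) F i <= \big[Rplus/0]_(i <- r | P i) G i.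
Proof.
move=> FG; apply: (big_ind2 (fun a b => a <= b)) => //; first lra.
by move=> *; apply: Rplus_le_compat.
Qed.

Lemma Rsum_ge0 (I : Type) (r : seq I) (P : pred I) (F : I -> R) :
  (forall i, P i -> 0 <= F i) -> 0 <= \big[Rplus/0]_(i <- r | P i) F i.
Proof.
move=> F_ge0; apply: (big_ind (fun a => 0 <= a)) => //; first lra.
by move=> *; apply: Rplus_le_le_0_compat.
Qed.

Lemma INR_sum (I : Type) (r : seq I) (P : pred I) (F : I -> nat) :
  INR (\sum_(i <- r | P i) F i)%N = \big[Rplus/0]_(i <- r | P i) INR (F i).
Proof. exact: (big_morph INR plus_INR). Qed.

Lemma INR_card (T : finType) (A : {pred T}) :
  INR #|A| = \big[Rplus/0]_(t : T) (if t \in A then 1 else 0).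
Proof.
rewrite -sum1_card INR_sum big_mkcond /=.
by apply: eq_bigr => t _; case: (t \in A).
Qed.

Lemma Rsum_const (I : finType) (P : pred I) (c : R) :
  \big[Rplus/0]_(i | P i) c = INR #|P| * c.
Proof.
rewrite big_const; elim: #|P| => [|k IH]; first by rewrite /=; ring.
by rewrite iterS IH S_INR; ring.
Qed.

Lemma Rprod_const (I : finType) (P : pred I) (c : R) :
  \big[Rmult/1]_(i | P i) c = c ^ #|P|.
Proof. by rewrite big_const; elim: #|P| => //= k ->. Qed.

Definition hdist (Q n : nat) (x y : word Q n) : nat := #|[set k | x k != y k]|.

Lemma hdist_sym (Q n : nat) (x y : word Q n) : hdist x y = hdist y x.
Proof. by apply: eq_card => k; rewrite !inE eq_sym. Qed.

Lemma hdist_refl (Q n : nat) (x : word Q n) : hdist x x = 0%N.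
Proof. by apply: eq_card0 => k; rewrite !inE eqxx. Qed.

Lemma card_setT_set (T : finType) : #|{: {set T}}| = (2 ^ #|T|)%N.
Proof.
rewrite -cardsT -(card_powerset [set: T]).
by apply: eq_card => A; rewrite powersetE subsetT inE.
Qed.

(* A Hamming ball of radius m has at most 2^n Q^m points: a word at distance
   <= m from x is determined by the set where it differs from x together with
   its (at most m) letters there. *)
Lemma card_hamming_ball (Q n m : nat) (x : word Q n) :
  (0 < n)%N -> (#|[set x' : word Q n | hdist x x' <= m]| <= 2 ^ n * Q ^ m)%N.
Proof.
move=> n_gt0; pose k0 : 'I_n := Ordinal n_gt0.
pose diff (x' : word Q n) := enum [set k | x k != x' k].
pose code (x' : word Q n) : {set 'I_n} * {ffun 'I_m -> 'I_Q} :=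
  ([set k | x k != x' k], [ffun i : 'I_m => x' (nth k0 (diff x') i)]).
rewrite -(card_in_imset (f := code)); last first.
  move=> x1 x2; rewrite !inE => x1_near _ [] same_diff same_letters.
  apply/ffunP => k; case: (boolP (x k != x1 k)) => [k_diff | /negPn/eqP same_k].
  - have k_idx : (index k (diff x1) < m)%N.
      by apply: leq_trans x1_near; rewrite /hdist cardE index_mem mem_enum inE.
    have := congr1 (fun f : {ffun 'I_m -> 'I_Q} => f (Ordinal k_idx)) same_letters.
    by rewrite !ffunE /= /diff -same_diff nth_index ?mem_enum ?inE.
  - have : k \notin [set k | x k != x2 k] by rewrite -same_diff inE same_k eqxx.
    by rewrite inE negbK -same_k => /eqP.
apply: leq_trans (max_card _) _.
by rewrite card_prod card_setT_set card_ffun !card_ord.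
Qed.

Lemma greedy_packing (U : finType) (c : rel U) (V : nat) (A : {set U}) :
  symmetric c -> reflexive c -> (forall x, #|[set y | c x y]| <= V)%N ->
  exists A' : {set U}, [/\ A' \subset A,
    {in A' &, forall x y, c x y -> x = y} & (#|A| <= #|A'| * V)%N].
Proof.
move=> c_sym c_refl nbhd_small.
move: {2}#|A| (leqnn #|A|) => N; elim: N A => [|N IH] A cardA.
  by exists set0; rewrite sub0set cards0; split=> //; first by move=> y z; rewrite inE.
case: (set_0Vmem A) => [-> | [x xA]].
  by exists set0; rewrite sub0set cards0; split=> //; first by move=> y z; rewrite inE.
set Nx := [set y | c x y].
have x_near : x \in A :&: Nx by rewrite !inE xA c_refl.
have near_small : (#|A :&: Nx| <= V)%N.
  by apply: leq_trans (nbhd_small x); apply/subset_leq_card/subsetIr.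
have card_split := cardsID Nx A.
have [|A1 [A1_sub A1_indep A1_big]] := IH (A :\: Nx).
  have /card_gt0P : exists y, y \in A :&: Nx by exists x.
  by move: cardA; rewrite -card_split; lia.
have x_notin_A1 : x \notin A1.
  by apply/negP => /(subsetP A1_sub); rewrite !inE c_refl.
exists (x |: A1); split.
- apply/subsetP => y; rewrite !inE => /orP[/eqP -> // | /(subsetP A1_sub)].
  by rewrite inE => /andP[].
- have far_x y : y \in A1 -> ~~ c x y.
    by move=> /(subsetP A1_sub); rewrite !inE => /andP[].
  move=> y z; rewrite !inE => /orP[/eqP -> | yA1] /orP[/eqP -> | zA1] //.
  + by move=> cxz; move: (far_x z zA1); rewrite cxz.
  + by rewrite c_sym => cxy; move: (far_x y yA1); rewrite cxy.
  + exact: A1_indep.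
- by rewrite cardsU1 x_notin_A1 mulSn -card_split; lia.
Qed.

Lemma achievable_rate_of_sets (Q n : nat) (W : channel Q) (A1 B1 : {set word Q n}) :
  (0 < #|A1|)%N -> (0 < #|B1|)%N ->
  (forall x x' y y', x \in A1 -> x' \in A1 -> y \in B1 -> y' \in B1 ->
     chan_n W.1 x y = chan_n W.1 x' y' -> x = x') ->
  (forall x x' y y', x \in A1 -> x' \in A1 -> y \in B1 -> y' \in B1 ->
     chan_n W.2 x y = chan_n W.2 x' y' -> y = y') ->
  achievable_rate n W (log2 (INR (#|A1| * #|B1|)) / INR n).
Proof.
move=> A1_gt0 B1_gt0 decode1 decode2.
pose E1 (i : 'I_#|A1|) : word Q n := enum_val i.
pose E2 (j : 'I_#|B1|) : word Q n := enum_val j.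
pose D1 (o : oword Q n) : 'I_#|A1| :=
  odflt (Ordinal A1_gt0) [pick i | [exists j, chan_n W.1 (E1 i) (E2 j) == o]].
pose D2 (o : oword Q n) : 'I_#|B1| :=
  odflt (Ordinal B1_gt0) [pick j | [exists i, chan_n W.2 (E1 i) (E2 j) == o]].
exists #|A1|, #|B1|, E1, E2, D1, D2; split=> //; split=> //; split=> // m1 m2.
split.
- rewrite /D1; case: pickP => [i /existsP [j /eqP out_eq] | none] /=.
    by apply: enum_val_inj; apply: (decode1 _ _ _ _ _ _ _ _ out_eq); apply: enum_valP.
  by move: (none m1) => /existsP; case; exists m2.
- rewrite /D2; case: pickP => [j /existsP [i /eqP out_eq] | none] /=.
    by apply: enum_val_inj; apply: (decode2 _ _ _ _ _ _ _ _ out_eq); apply: enum_valP.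
  by move: (none m2) => /existsP; case; exists m1.
Qed.

Definition ercount (Q n : nat) (S : {set 'I_Q * 'I_Q}) (x y : word Q n) : nat :=
  #|[set k | (x k, y k) \in S]|.

Lemma ercount_sum (Q n : nat) (S : {set 'I_Q * 'I_Q}) (x y : word Q n) :
  ercount S x y = (\sum_(s in S) pair_count x y s.1 s.2)%N.
Proof.
rewrite /ercount -sum1_card.
rewrite (partition_big (fun k => (x k, y k)) (mem S)) /=; last by move=> k; rewrite inE.
apply: eq_bigr => -[a b] ab_S; rewrite /pair_count -sum1_card.
apply: eq_bigl => k; rewrite !inE xpair_eqE /=.
by case: (x k =P a) => [-> | _]; case: (y k =P b) => [-> | _]; rewrite ?ab_S ?andbF.
Qed.

Lemma ercount_uniform_bound (Q n : nat) (g : R) (S : {set 'I_Q * 'I_Q})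
    (x y : word Q n) :
  gamma_uniform_pair g x y ->
  INR (ercount S x y) <= INR #|S| * ((1 + g) * INR n / INR (Q * Q)).
Proof.
move=> xy_unif; rewrite ercount_sum INR_sum -Rsum_const.
by apply: Rsum_le => s _; case: (xy_unif s.1 s.2).
Qed.

Lemma erasure_out1_diff (Q n : nat) (S : {set 'I_Q * 'I_Q}) (x x' y y' : word Q n) :
  chan_n (erasure_channel S).1 x y = chan_n (erasure_channel S).1 x' y' ->
  [set k | x k != x' k] \subset [set k | (x k, y k) \in S].
Proof.
move=> same_out; apply/subsetP => k; rewrite !inE; apply: contraR => not_erased.
have := congr1 (fun o : oword Q n => o k) same_out.
rewrite /chan_n !ffunE /= (negbTE not_erased).
by case: ((x' k, y' k) \in S) => // -[->].
Qed.

Lemma erasure_out2_diff (Q n : nat) (S : {set 'I_Q * 'I_Q}) (x x' y y' : word Q n) :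
  chan_n (erasure_channel S).2 x y = chan_n (erasure_channel S).2 x' y' ->
  [set k | y k != y' k] \subset [set k | (x k, y k) \in S].
Proof.
move=> same_out; apply/subsetP => k; rewrite !inE; apply: contraR => not_erased.
have := congr1 (fun o : oword Q n => o k) same_out.
rewrite /chan_n !ffunE /= (negbTE not_erased).
by case: ((x' k, y' k) \in S) => // -[->].
Qed.

Lemma erasure_channel_code (Q n m : nat) (S : {set 'I_Q * 'I_Q})
    (A B : {set word Q n}) :
  (0 < n)%N -> (0 < #|A|)%N -> (0 < #|B|)%N ->
  (forall x y, x \in A -> y \in B -> ercount S x y <= m)%N ->
  exists A1 B1 : {set word Q n},
    [/\ (#|A| <= #|A1| * (2 ^ n * Q ^ m))%N, (#|B| <= #|B1| * (2 ^ n * Q ^ m))%N &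
      achievable_rate n (erasure_channel S) (log2 (INR (#|A1| * #|B1|)) / INR n)].
Proof.
move=> n_gt0 A_gt0 B_gt0 few_erasures.
pose near (x y : word Q n) := (hdist x y <= m)%N.
have near_sym : symmetric near by move=> x y; rewrite /near hdist_sym.
have near_refl : reflexive near by move=> x; rewrite /near hdist_refl.
have ball_small x : (#|[set y | near x y]| <= 2 ^ n * Q ^ m)%N.
  exact: card_hamming_ball.
have [A1 [A1_sub A1_sep A1_big]] := greedy_packing A near_sym near_refl ball_small.
have [B1 [B1_sub B1_sep B1_big]] := greedy_packing B near_sym near_refl ball_small.
have pos_of_big (C C1 : {set word Q n}) :
    (0 < #|C|)%N -> (#|C| <= #|C1| * (2 ^ n * Q ^ m))%N -> (0 < #|C1|)%N.
  by case: #|C1| => [|//]; rewrite mul0n leqn0 => /lt0n_neq0/negbTE ->.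
exists A1, B1; split=> //.
apply: achievable_rate_of_sets; [exact: pos_of_big A_gt0 A1_big
                               | exact: pos_of_big B_gt0 B1_big | | ].
- move=> x x' y y' xA1 x'A1 yB1 _ same_out; apply: A1_sep => //.
  apply: leq_trans (few_erasures x y (subsetP A1_sub x xA1) (subsetP B1_sub y yB1)).
  exact: subset_leq_card (erasure_out1_diff same_out).
- move=> x x' y y' xA1 _ yB1 y'B1 same_out; apply: B1_sep => //.
  apply: leq_trans (few_erasures x y (subsetP A1_sub x xA1) (subsetP B1_sub y yB1)).
  exact: subset_leq_card (erasure_out2_diff same_out).
Qed.

Lemma INR_expn (a k : nat) : INR (a ^ k)%N = INR a ^ k.
Proof. by elim: k => [|k IH] //; rewrite expnS mult_INR IH. Qed.

Lemma ln2_gt0 : 0 < ln 2.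
Proof. rewrite -ln_1; apply: ln_increasing; lra. Qed.

Lemma ln_pow2 (k : nat) : ln (INR (2 ^ k)%N) = INR k * ln 2.
Proof. by rewrite INR_expn ln_pow /=; last lra. Qed.

Lemma log2_pow2 (k : nat) : log2 (INR (2 ^ k)%N) = INR k.
Proof. by rewrite /log2 ln_pow2; have := ln2_gt0; move=> ln2_pos; field; lra. Qed.

Lemma log2_mult (x y : R) : 0 < x -> 0 < y -> log2 (x * y) = log2 x + log2 y.
Proof. by move=> x_gt0 y_gt0; rewrite /log2 ln_mult // /Rdiv Rmult_plus_distr_r. Qed.

Lemma log2_ge_of_Rpower_le (q : nat) (x a : R) :
  Rpower (INR (2 ^ q)%N) x <= a -> x * INR q <= log2 a.
Proof.
move=> pow_le; have ln_le : ln (Rpower (INR (2 ^ q)%N) x) <= ln a.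
  case: pow_le => [pow_lt | ->]; last lra.
  by apply/Rlt_le/ln_increasing => //; apply: exp_pos.
move: ln_le; rewrite /Rpower ln_exp ln_pow2 /log2 => ln_le.
have ln2_pos := ln2_gt0.
apply: (Rmult_le_reg_r (ln 2)) => //.
have -> : ln a / ln 2 * ln 2 = ln a by field; lra.
lra.
Qed.

Lemma log2_packing_lower_bound (q n m c : nat) (d : R) :
  Rpower (INR (2 ^ q)%N) (INR n * (1 - d)) <= INR (c * (2 ^ n * (2 ^ q) ^ m)) ->
  0 < INR c /\ INR n * (1 - d) * INR q - (INR n + INR q * INR m) <= log2 (INR c).
Proof.
move=> c_big; have cV_gt0 : (0 < c * (2 ^ n * (2 ^ q) ^ m))%N.
  by apply/ltP/INR_lt; apply: Rlt_le_trans c_big; apply: exp_pos.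
have [c_gt0 V_gt0] : (0 < c)%N /\ (0 < 2 ^ n * (2 ^ q) ^ m)%N.
  by apply/andP; rewrite -muln_gt0.
have log2_ball : log2 (INR (2 ^ n * (2 ^ q) ^ m)) = INR n + INR q * INR m.
  by rewrite -expnM -expnD log2_pow2 plus_INR mult_INR.
have c_pos : 0 < INR c by apply/lt_0_INR/ltP.
split=> //; move/log2_ge_of_Rpower_le: c_big.
rewrite mult_INR log2_mult ?log2_ball //; first lra.
exact/lt_0_INR/ltP.
Qed.

Lemma rate_lower_bound (q n m a b : nat) (d1 d2 : R) :
  (0 < n)%N ->
  Rpower (INR (2 ^ q)%N) (INR n * (1 - d1)) <= INR (a * (2 ^ n * (2 ^ q) ^ m)) ->
  Rpower (INR (2 ^ q)%N) (INR n * (1 - d2)) <= INR (b * (2 ^ n * (2 ^ q) ^ m)) ->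
  2 * INR q * (1 - (d1 + d2) / 2) - 2 - 2 * INR q * INR m / INR n
    <= log2 (INR (a * b)) / INR n.
Proof.
move=> n_gt0 a_big b_big.
have n_pos : 0 < INR n by apply/lt_0_INR/ltP.
have [a_pos a_rate] := log2_packing_lower_bound a_big.
have [b_pos b_rate] := log2_packing_lower_bound b_big.
rewrite mult_INR log2_mult //.
apply: (Rmult_le_reg_r (INR n)) => //.
have -> : (log2 (INR a) + log2 (INR b)) / INR n * INR n
          = log2 (INR a) + log2 (INR b) by field; lra.
have -> : (2 * INR q * (1 - (d1 + d2) / 2) - 2 - 2 * INR q * INR m / INR n) * INR n
          = INR n * (1 - d1) * INR q + INR n * (1 - d2) * INR q
            - 2 * (INR n + INR q * INR m).
  by field; lra.
lra.
Qed.

Definition bernoulli_weight (T : finType) (p : R) (S : {set T}) : R :=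
  \big[Rmult/1]_(t : T) (if t \in S then p else 1 - p).

Lemma bernoulli_weightE (T : finType) (p : R) (S : {set T}) :
  bernoulli_weight p S = p ^ #|S| * (1 - p) ^ (#|T| - #|S|)%N.
Proof.
rewrite /bernoulli_weight (bigID (mem S)) /=.
rewrite (eq_bigr (fun=> p)); last by move=> t ->.
rewrite [X in _ * X](eq_bigr (fun=> 1 - p)); last by move=> t /negbTE ->.
rewrite !Rprod_const; congr (_ * _ ^ _).
rewrite (cardsCs S) subKn ?max_card //.
by apply: eq_card => t; rewrite !inE.
Qed.

Lemma erasure_weightE (Q : nat) (eps : R) (S : {set 'I_Q * 'I_Q}) :
  erasure_weight eps S = bernoulli_weight eps S.
Proof. by rewrite bernoulli_weightE /erasure_weight card_prod !card_ord. Qed.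

Lemma bernoulli_weight_ge0 (T : finType) (p : R) (S : {set T}) :
  0 <= p <= 1 -> 0 <= bernoulli_weight p S.
Proof.
move=> p_prob; apply: (big_ind (fun a => 0 <= a)); first lra.
  by move=> *; apply: Rmult_le_pos.
by move=> t _; case: (t \in S); lra.
Qed.

Lemma sum_subsets_prod (T : finType) (F : T -> bool -> R) :
  \big[Rplus/0]_(S : {set T}) \big[Rmult/1]_(t : T) F t (t \in S) =
  \big[Rmult/1]_(t : T) (F t true + F t false).
Proof.
transitivity (\big[Rmult/1]_(t : T) \big[Rplus/0]_(b : bool) F t b).
  rewrite bigA_distr_bigA (reindex (fun S : {set T} => [ffun t => t \in S])) /=.
    by apply: eq_bigr => S _; apply: eq_bigr => t _; rewrite ffunE.
  exists (fun f : {ffun T -> bool} => [set t | f t]) => f _.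
    by apply/setP => t; rewrite inE ffunE.
  by apply/ffunP => t; rewrite ffunE inE.
by apply: eq_bigr => t _; rewrite big_bool /= Rplus_comm.
Qed.

Lemma bernoulli_total (T : finType) (p : R) :
  \big[Rplus/0]_(S : {set T}) bernoulli_weight p S = 1.
Proof.
rewrite /bernoulli_weight (sum_subsets_prod (fun t b => if b then p else 1 - p)).
by rewrite big1 // => t _; ring.
Qed.

Lemma bernoulli_mem (T : finType) (p : R) (t0 : T) :
  \big[Rplus/0]_(S : {set T}) (if t0 \in S then bernoulli_weight p S else 0) = p.
Proof.
pose F t (b : bool) := if b then p else if t == t0 then 0 else 1 - p.
transitivity (\big[Rplus/0]_(S : {set T}) \big[Rmult/1]_(t : T) F t (t \in S)).
  apply: eq_bigr => S _; rewrite /bernoulli_weight (bigD1 t0) //= [RHS](bigD1 t0) //=.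
  rewrite /F eqxx [X in _ = _ * X](eq_bigr (fun t => if t \in S then p else 1 - p)).
    by case: (t0 \in S); ring.
  by move=> t /negbTE t_ne; case: (t \in S); rewrite ?t_ne.
rewrite sum_subsets_prod (bigD1 t0) //= big1; first by rewrite /F eqxx; ring.
by move=> t /negbTE t_ne; rewrite /F t_ne; ring.
Qed.

Lemma bernoulli_mean_card (T : finType) (p : R) :
  \big[Rplus/0]_(S : {set T}) (INR #|S| * bernoulli_weight p S) = INR #|T| * p.
Proof.
transitivity (\big[Rplus/0]_(S : {set T}) \big[Rplus/0]_(t : T)
                (if t \in S then bernoulli_weight p S else 0)).
  apply: eq_bigr => S _; rewrite INR_card big_distrl /=.
  by apply: eq_bigr => t _; case: (t \in S); ring.
rewrite exchange_big /= (eq_bigr (fun=> p)); last by move=> t _; exact: bernoulli_mem.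
by rewrite Rsum_const.
Qed.

Definition Rleb (x y : R) : bool := if Rle_dec x y then true else false.

Lemma RlebP (x y : R) : reflect (x <= y) (Rleb x y).
Proof. by rewrite /Rleb; case: Rle_dec; constructor. Qed.

(* Markov's inequality for the size of the random set: with probability at
   least 1/2 it has at most 2 p |T| elements. *)
Lemma bernoulli_card_small (T : finType) (p : R) : 0 <= p <= 1 ->
  / 2 <= \big[Rplus/0]_(S in [set S : {set T} | Rleb (INR #|S|) (2 * p * INR #|T|)])
           bernoulli_weight p S.
Proof.
move=> p_prob; set Ev := [set S : {set T} | _].
have w_ge0 (S : {set T}) := bernoulli_weight_ge0 S p_prob.
have mean_ge0 : 0 <= p * INR #|T| by apply: Rmult_le_pos; [lra | apply: pos_INR].
case: (Rle_lt_or_eq_dec _ _ mean_ge0) => [mean_pos | mean0].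
  set b := \big[Rplus/0]_(S | S \notin Ev) bernoulli_weight p S.
  have total : \big[Rplus/0]_(S in Ev) bernoulli_weight p S + b = 1.
    by rewrite -(bernoulli_total T p) [RHS](bigID (mem Ev)).
  suff tail_bound : 2 * p * INR #|T| * b <= p * INR #|T|.
    suff : 2 * b <= 1 by lra.
    by apply: (Rmult_le_reg_l (p * INR #|T|)) => //; lra.
  rewrite /b big_distrr /=.
  apply: Rle_trans (_ : \big[Rplus/0]_(S | S \notin Ev) (INR #|S| * bernoulli_weight p S)
                        <= _).
    apply: Rsum_le => S; rewrite inE => /RlebP/Rnot_le_lt large.
    by apply: Rmult_le_compat_r; [exact: w_ge0 | exact: Rlt_le].
  rewrite Rmult_comm -bernoulli_mean_card [X in _ <= X](bigID (mem Ev)) /=.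
  rewrite -[X in X <= _]Rplus_0_l; apply: Rplus_le_compat_r.
  by apply: Rsum_ge0 => S _; apply: Rmult_le_pos; [apply: pos_INR | ].
(* When p |T| = 0, the empty pattern alone already has weight 1. *)
have set0_Ev : set0 \in Ev by rewrite inE cards0; apply/RlebP; change (INR 0) with 0; lra.
rewrite (bigD1 set0) //=.
have -> : bernoulli_weight p (set0 : {set T}) = 1.
  rewrite bernoulli_weightE cards0 subn0 /=.
  case: (Rmult_integral _ _ (esym mean0)) => [-> | T0].
    by rewrite Rminus_0_r pow1 /=; ring.
  have -> : #|T| = 0%N by apply: INR_eq; rewrite T0.
  by rewrite /=; ring.
rewrite -[X in X <= _]Rplus_0_r; apply: Rplus_le_compat; first lra.
exact: Rsum_ge0.
Qed.

Lemma ercount_few_erasures (Q n : nat) (g eps : R) (S : {set 'I_Q * 'I_Q})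
    (x y : word Q n) :
  (0 < Q)%N -> 0 <= g -> INR #|S| <= 2 * eps * INR (Q * Q) ->
  gamma_uniform_pair g x y -> INR (ercount S x y) <= 2 * (1 + g) * eps * INR n.
Proof.
move=> Q_gt0 g_ge0 S_small xy_unif.
have QQ_pos : 0 < INR (Q * Q) by apply/lt_0_INR/ltP; rewrite muln_gt0 Q_gt0.
have per_pair_ge0 : 0 <= (1 + g) * INR n / INR (Q * Q).
  by apply: Rmult_le_pos; [apply: Rmult_le_pos; [lra | apply: pos_INR]
                          | apply/Rlt_le/Rinv_0_lt_compat].
apply: Rle_trans (ercount_uniform_bound S xy_unif) _.
apply: Rle_trans (Rmult_le_compat_r _ _ _ per_pair_ge0 S_small) _.
by apply: Req_le; field; lra.
Qed.

Lemma rate_of_few_erasures (q n : nat) (g eps d1 d2 delta : R)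
    (A B : {set word (2 ^ q)%N n}) (S : {set 'I_(2 ^ q) * 'I_(2 ^ q)}) :
  (1 <= n)%N -> 0 <= g -> 0 <= eps -> gamma_uniform_sets g A B ->
  Rpower (INR (2 ^ q)%N) (INR n * (1 - d1)) <= INR #|A| ->
  Rpower (INR (2 ^ q)%N) (INR n * (1 - d2)) <= INR #|B| ->
  0 < delta -> INR #|S| <= 2 * eps * INR (2 ^ q * 2 ^ q)%N ->
  zero_error_rate_ge n (erasure_channel S)
    (2 * INR q * (1 - ((d1 + d2) / 2 + 2 * (1 + g) * eps + delta)) - 2).
Proof.
move=> n_gt0 g_ge0 eps_ge0 AB_unif A_big B_big delta_pos S_small.
pose m := (\max_(xy in setX A B) ercount S xy.1 xy.2)%N.
have few_erasures x y : x \in A -> y \in B -> (ercount S x y <= m)%N.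
  by move=> xA yB; apply: (leq_bigmax_cond (x, y)); rewrite inE xA yB.
have m_small : INR m <= 2 * (1 + g) * eps * INR n.
  apply: (big_ind (fun k => INR k <= _)) => [| k l k_le l_le | [x y]].
  - by apply: Rmult_le_pos; [nra | apply: pos_INR].
  - by rewrite /maxn; case: (k < l)%N.
  - rewrite inE => /andP[xA yB]; apply: ercount_few_erasures => //.
      by rewrite expn_gt0.
    exact: AB_unif.
have card_pos (C : {set word (2 ^ q)%N n}) (d : R) :
    Rpower (INR (2 ^ q)%N) (INR n * (1 - d)) <= INR #|C| -> (0 < #|C|)%N.
  move=> C_big; apply/ltP/INR_lt; apply: Rlt_le_trans C_big; apply: exp_pos.
have [A1 [B1 [A1_big B1_big rate_ok]]] :=
  erasure_channel_code n_gt0 (card_pos _ _ A_big) (card_pos _ _ B_big) few_erasures.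
move=> Rsup [Rsup_ub _]; apply: Rle_trans (Rsup_ub _ rate_ok).
have := rate_lower_bound n_gt0 (Rle_trans _ _ _ A_big (le_INR _ _ (leP A1_big)))
                               (Rle_trans _ _ _ B_big (le_INR _ _ (leP B1_big))).
have n_pos : 0 < INR n by apply/lt_0_INR/ltP.
have rate_loss : 2 * INR q * INR m / INR n <= 2 * INR q * (2 * (1 + g) * eps).
  apply: (Rmult_le_reg_r (INR n)) => //.
  have -> : 2 * INR q * INR m / INR n * INR n = 2 * INR q * INR m by field; lra.
  by have := pos_INR q; nra.
by have := pos_INR q; nra.
Qed.

Theorem theorem2 (q n : nat) (g eps d1 d2 delta : R)
  (A B : {set word (2 ^ q)%N n}) :
  (1 <= q)%N -> (1 <= n)%N ->
  0 <= g -> 0 <= eps <= 1 -> 0 <= d1 -> 0 <= d2 ->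
  gamma_uniform_sets g A B ->
  Rpower (INR (2 ^ q)%N) (INR n * (1 - d1)) <= INR #|A| ->
  Rpower (INR (2 ^ q)%N) (INR n * (1 - d2)) <= INR #|B| ->
  0 < delta ->
  @prob_at_least (2 ^ q)%N eps
    (fun W => zero_error_rate_ge n W
       (2 * INR q * (1 - ((d1 + d2) / 2 + 2 * (1 + g) * eps + delta)) - 2))
    (/ 2).
Proof.
move=> _ n_gt0 g_ge0 eps_prob _ _ AB_unif A_big B_big delta_pos.
have card_pairs : #|{: 'I_(2 ^ q) * 'I_(2 ^ q)}| = (2 ^ q * 2 ^ q)%N.
  by rewrite card_prod card_ord.
exists [set S : {set 'I_(2 ^ q) * 'I_(2 ^ q)} |
         Rleb (INR #|S|) (2 * eps * INR #|{: 'I_(2 ^ q) * 'I_(2 ^ q)}|)]; split.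
  move=> S; rewrite inE card_pairs => /RlebP S_small.
  have [eps_ge0 _] := eps_prob.
  exact: (rate_of_few_erasures n_gt0 g_ge0 eps_ge0 AB_unif A_big B_big delta_pos S_small).
rewrite (eq_bigr (bernoulli_weight eps)); last by move=> S _; apply: erasure_weightE.
exact: bernoulli_card_small.
Qed.
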